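(* Let $a^1,\dots,a^N\in\mathbb{R}^{V_+}$ and $h\in\mathbb{R}$, and let $$\mathcal{H}=\Big\{(\theta,y)\in\mathbb{R}^{V_+}_{\ge0}\times\mathbb{R}^{[N]\times V_+}_{\ge0}:\ \sum_{\xi\in[N]}(a^\xi)^\top y^\xi\ge h,\ \ \theta_v\ge\sum_{\xi\in[N]}p_\xi w_vy^\xi_v\ \forall v\in V_+\Big\}.$$ Then: if there exist $v\in V_+$ and $\xi\in[N]$ with $w_v=0$ and $a^\xi_v>0$, the projection of $\mathcal{H}$ onto $\theta$ is $\mathbb{R}^{V_+}_{\ge0}$; otherwise the projection of $\mathcal{H}$ onto $\theta$ equals $$\Big\{\theta\in\mathbb{R}^{V_+}_{\ge0}:\ \sum_{v\in V_+:\,w_v>0}\Big(\max_{\xi\in[N]}\frac{a^\xi_v}{p_\xi w_v}\Big)^+\theta_v\ge h\Big\}.$$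
   Context: $V_+$ is a finite set (customers); $N$ is a positive integer; $p_\xi\in[0,1]$ for $\xi\in[N]$ with $\sum_\xi p_\xi=1$ are scenario probabilities; $w\in\mathbb{Q}^{V_+}_{\ge0}$ is a fixed weight vector. Vectors $y\in\mathbb{R}^{[N]\times V_+}$ have entries $y^\xi_v$, and $y^\xi\in\mathbb{R}^{V_+}$ is the restriction to scenario $\xi$. $(a)^+=\max\{a,0\}$. *)

From HB Require Import structures.
From mathcomp Require Import all_boot all_order all_algebra.
Set Implicit Arguments. Unset Strict Implicit. Unset Printing Implicit Defensive.
Import Order.TTheory GRing.Theory Num.Theory.
Local Open Scope ring_scope.

Definition posPart (R : realFieldType) (x : R) : R := Num.max x 0.

Definition inH (R : realFieldType) (V : finType) (N : nat)
    (p : 'I_N -> R) (w : V -> rat) (a : 'I_N -> V -> R) (h : R)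
    (theta : V -> R) (y : 'I_N -> V -> R) : Prop :=
  (forall v, 0 <= theta v) /\
  (forall xi v, 0 <= y xi v) /\
  h <= \sum_(xi < N) \sum_(v : V) a xi v * y xi v /\
  (forall v, \sum_(xi < N) p xi * ratr (w v) * y xi v <= theta v).

Definition projH (R : realFieldType) (V : finType) (N : nat)
    (p : 'I_N -> R) (w : V -> rat) (a : 'I_N -> V -> R) (h : R)
    (theta : V -> R) : Prop :=
  exists y : 'I_N -> V -> R, inH p w a h theta y.

From HB Require Import structures.
From mathcomp Require Import all_boot all_order all_algebra.
Import Order.TTheory GRing.Theory Num.Theory.
Set Implicit Arguments. Unset Strict Implicit. Unset Printing Implicit Defensive.
Local Open Scope ring_scope.

(* A customer v with w_v = 0 carries no cost constraint, so if some a^xi_v > 0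
   a single large y^xi_v reaches any threshold h.  Otherwise such customers
   contribute at most 0 to the objective, and for a customer with w_v > 0 the
   objective splits as sum_xi (a^xi_v / (p_xi w_v)) (p_xi w_v y^xi_v): it is at
   most the largest (nonnegative part of the) ratio times theta_v, with
   equality when all of theta_v is spent on a scenario attaining that ratio. *)

Lemma sum_mul_ifeq (R : pzSemiRingType) (I : finType) (F : I -> R) j c :
  \sum_i F i * (if i == j then c else 0) = F j * c.
Proof. by rewrite (bigD1 j) //= eqxx big1 ?addr0 // => i /negbTE ->; rewrite mulr0. Qed.

Lemma bigmax0_attained (R : realDomainType) (I : finType) (F : I -> R) :
  \big[Num.max/0]_i F i = 0 \/ exists j, \big[Num.max/0]_i F i = F j.
Proof.
apply: (big_ind (fun x => x = 0 \/ exists j, x = F j)) => [|x y hx hy|j _].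
- by left.
- by case: (leP x y).
- by right; exists j.
Qed.

Section MaxRatio.

Variables (R : realFieldType) (I : finType) (q a : I -> R).
Hypothesis q_gt0 : forall i, 0 < q i.

Definition max_ratio : R := \big[Num.max/0]_i (a i / q i).

Lemma max_ratio_ge0 : 0 <= max_ratio.
Proof. exact: bigmax_ge_id. Qed.

Lemma sum_le_max_ratio (y : I -> R) : (forall i, 0 <= y i) ->
  \sum_i a i * y i <= max_ratio * \sum_i q i * y i.
Proof.
move=> y_ge0; rewrite mulr_sumr; apply: ler_sum => i _.
rewrite mulrA ler_wpM2r // -[a i](divfK (lt0r_neq0 (q_gt0 i))) ler_wpM2r //.
- exact/ltW.
- exact: le_bigmax.
Qed.

Lemma max_ratio_attained (t : R) : 0 <= t ->
  exists y : I -> R, [/\ forall i, 0 <= y i, \sum_i q i * y i <= t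
                       & \sum_i a i * y i = max_ratio * t].
Proof.
move=> t_ge0; case: (bigmax0_attained (fun i => a i / q i)) => [M0 | [j Mj]].
  exists (fun _ => 0); rewrite /max_ratio M0 mul0r.
  by split=> //; rewrite big1 // => i _; rewrite mulr0.
have qj_neq0 : q j != 0 := lt0r_neq0 (q_gt0 j).
exists (fun i => if i == j then t / q j else 0); split.
- by move=> i; case: ifP => // _; rewrite divr_ge0 // ltW.
- by rewrite sum_mul_ifeq mulrC divfK.
- by rewrite sum_mul_ifeq /max_ratio Mj mulrA mulrAC.
Qed.

End MaxRatio.

Section Projection.

Variables (R : realFieldType) (V : finType) (N : nat).
Variables (p : 'I_N -> R) (w : V -> rat) (a : 'I_N -> V -> R) (h : R).

Lemma projH_free_customer v0 xi0 (theta : V -> R) :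
  w v0 = 0 -> 0 < a xi0 v0 -> (forall v, 0 <= theta v) -> projH p w a h theta.
Proof.
move=> w0 a_gt0 theta_ge0; pose c := Num.max h 0 / a xi0 v0.
exists (fun xi v => if xi == xi0 then if v == v0 then c else 0 else 0).
split=> //; split; [|split].
- move=> xi v; case: ifP => // _; case: ifP => // _.
  by rewrite divr_ge0 ?le_max ?lexx ?orbT // ltW.
- rewrite (bigD1 xi0) //= eqxx sum_mul_ifeq big1 ?addr0.
    by rewrite mulrCA divff ?mulr1 ?le_max ?lexx // gt_eqF.
  by move=> xi /negbTE ->; rewrite big1 // => v _; rewrite mulr0.
- move=> v; rewrite big1 // => xi _.
  case: (eqVneq v v0) => [->|/negbTE ne]; first by rewrite w0 rmorph0 mulr0 mul0r.
  by case: ifP; rewrite ?ne mulr0.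
Qed.

Hypothesis p_gt0 : forall xi, 0 < p xi.
Hypothesis w_ge0 : forall v, 0 <= w v.

Local Notation max_ratio_at v := (max_ratio (fun xi => p xi * ratr (w v)) (a^~ v)).

Lemma projH_objective_le (theta : V -> R) (y : 'I_N -> V -> R) :
  (forall v xi, w v = 0 -> a xi v <= 0) ->
  (forall xi v, 0 <= y xi v) ->
  (forall v, \sum_(xi < N) p xi * ratr (w v) * y xi v <= theta v) ->
  \sum_(xi < N) \sum_(v : V) a xi v * y xi v
    <= \sum_(v : V | 0 < w v) max_ratio_at v * theta v.
Proof.
move=> a_le0 y_ge0 cost_le; rewrite exchange_big [leRHS]big_mkcond /=.
apply: ler_sum => v _; case: ifPn => [w_gt0 | w_le0].
  have pw_gt0 xi : 0 < p xi * ratr (w v) by rewrite mulr_gt0 // ltr0q.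
  apply: le_trans (sum_le_max_ratio (a^~ v) pw_gt0 (y_ge0^~ v)) _.
  by rewrite ler_wpM2l // max_ratio_ge0.
have w0 : w v = 0 by apply/eqP; rewrite eq_le leNgt w_le0 w_ge0.
by apply: sumr_le0 => xi _; rewrite mulr_le0_ge0 // a_le0.
Qed.

Lemma projH_objective_attained (theta : V -> R) : (forall v, 0 <= theta v) ->
  exists y : 'I_N -> V -> R,
    [/\ forall xi v, 0 <= y xi v,
        forall v, \sum_(xi < N) p xi * ratr (w v) * y xi v <= theta v
      & \sum_(xi < N) \sum_(v : V) a xi v * y xi v
          = \sum_(v : V | 0 < w v) max_ratio_at v * theta v].
Proof.
move=> theta_ge0.
have optimal_at v : exists zv : 'I_N -> R,
    [/\ forall xi, 0 <= zv xi,
        \sum_(xi < N) p xi * ratr (w v) * zv xi <= theta v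
      & \sum_(xi < N) a xi v * zv xi = if 0 < w v then max_ratio_at v * theta v else 0].
  case: ifPn => w_gt0.
    by apply: max_ratio_attained => // xi; rewrite mulr_gt0 // ltr0q.
  by exists (fun _ => 0); split=> //; rewrite big1 // => xi _; rewrite mulr0.
have [z z_spec] := fin_all_exists optimal_at.
exists (fun xi v => z v xi); split.
- by move=> xi v; have [] := z_spec v.
- by move=> v; have [] := z_spec v.
- rewrite exchange_big [RHS]big_mkcond /=; apply: eq_bigr => v _.
  by have [] := z_spec v.
Qed.

End Projection.

Theorem lemma5 (R : realFieldType) (V : finType) (N : nat)
    (p : 'I_N -> R) (w : V -> rat) (a : 'I_N -> V -> R) (h : R) :
  (0 < N)%N ->
  (forall xi, 0 < p xi) -> (forall xi, p xi <= 1) ->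
  \sum_(xi < N) p xi = 1 ->
  (forall v, 0 <= w v) ->
  ((exists v xi, w v = 0 /\ 0 < a xi v) ->
     forall theta : V -> R, projH p w a h theta <-> (forall v, 0 <= theta v)) /\
  (~ (exists v xi, w v = 0 /\ 0 < a xi v) ->
     forall theta : V -> R, projH p w a h theta <->
       ((forall v, 0 <= theta v) /\
        h <= \sum_(v : V | 0 < w v)
               posPart (\big[Num.max/0]_(xi < N) (a xi v / (p xi * ratr (w v))))
               * theta v)).
Proof.
move=> _ p_gt0 _ _ w_ge0; split.
  move=> [v0 [xi0 [w0 a_gt0]]] theta.
  by split=> [[y []] // | ]; apply: projH_free_customer w0 a_gt0.
move=> no_free theta.
have a_le0 v xi : w v = 0 -> a xi v <= 0.
  by move=> w0; rewrite leNgt; apply/negP => a_gt0; apply: no_free; exists v, xi.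
under eq_bigr do rewrite /posPart (max_idPl (max_ratio_ge0 _ _)).
split.
  case=> y [theta_ge0 [y_ge0 [h_le cost_le]]]; split => //.
  exact: le_trans h_le (projH_objective_le p_gt0 w_ge0 a_le0 y_ge0 cost_le).
case=> theta_ge0 h_le.
have [y [y_ge0 cost_le obj]] := projH_objective_attained w a p_gt0 theta_ge0.
by exists y; do !split => //; rewrite obj.
Qed.
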